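(* If $X\subseteq \mathcal P(\omega)$ is an ultrafilter on $\omega$ (viewed as a subspace of $2^\omega$ via characteristic functions), then Alice has a winning strategy in the grouped Menger game played on $X$.
   Context: $\mathcal P(\omega)$ is identified with $2^\omega$ via characteristic functions, with the product topology. Grouped Menger game on $X\subseteq 2^\omega$: in each round $n\in\omega$ Alice selects a natural number $l_n>0$ and then the players play $l_n$ subrounds of the Menger game, indexed by $i\in[L_n,L_{n+1})$ where $L_0=0$, $L_{n+1}=l_0+\dots+l_n$: in subround $i$ Alice picks an open cover $\mathcal U_i$ of $X$ and Bob picks a finite $\mathcal F_i\subseteq\mathcal U_i$. Bob wins if $X=\bigcup_{n\in\omega}\bigcap_{i\in[L_n,L_{n+1})}\bigcup\mathcal F_i$; otherwise Alice wins. *)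

From HB Require Import structures.
From mathcomp Require Import all_boot all_order all_algebra.
From mathcomp Require Import all_classical all_reals all_analysis.
Set Implicit Arguments. Unset Strict Implicit. Unset Printing Implicit Defensive.
Local Open Scope classical_set_scope.

(* P(omega) identified with 2^omega = cantor_space (product topology). *)

Definition rel_open (X U : set cantor_space) : Prop :=
  exists V : set cantor_space, open V /\ U = V `&` X.

Definition open_cover_of (X : set cantor_space) (C : set (set cantor_space)) : Prop :=
  (forall U, C U -> rel_open X U) /\ X `<=` \bigcup_(U in C) U.

(* Histories are the finite
   sequences of Bob's moves so far (Alice's own moves are determined by her
   strategy).  [gs_len h] is the number l_n of subrounds Alice announces at a
   round beginning after history h; [gs_cov h] is the cover she plays in the
   subround following history h. *)
Record grouped_strategy := GStrat {
  gs_len : seq (set (set cantor_space)) -> nat;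
  gs_cov : seq (set (set cantor_space)) -> set (set cantor_space) }.

Definition valid_strategy (X : set cantor_space) (s : grouped_strategy) : Prop :=
  (forall h, (0 < gs_len s h)%N) /\ (forall h, open_cover_of X (gs_cov s h)).

Fixpoint round_start (s : grouped_strategy) (F : nat -> set (set cantor_space))
    (n : nat) : nat :=
  match n with
  | 0 => 0
  | n'.+1 => (round_start s F n' + gs_len s (mkseq F (round_start s F n')))%N
  end.

Definition bob_play (s : grouped_strategy) (F : nat -> set (set cantor_space)) : Prop :=
  forall i, finite_set (F i) /\ F i `<=` gs_cov s (mkseq F i).

Definition bob_wins (X : set cantor_space) (s : grouped_strategy)
    (F : nat -> set (set cantor_space)) : Prop :=
  X = \bigcup_(n in [set: nat])
        \bigcap_(i in [set i : nat | (round_start s F n <= i < round_start s F n.+1)%N])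
          \bigcup_(U in F i) U.

Definition alice_winning_strategy (X : set cantor_space) (s : grouped_strategy) : Prop :=
  valid_strategy X s /\ forall F, bob_play s F -> ~ bob_wins X s F.

Definition as_cantor (F : set_system nat) : set cantor_space :=
  [set f : cantor_space | F [set n | f n]].

Definition nonprincipal (F : set_system nat) : Prop :=
  forall A, F A -> infinite_set A.

From mathcomp Require Import all_boot all_classical all_reals all_analysis.
From mathcomp Require Import zify.

Set Implicit Arguments.
Unset Strict Implicit.
Unset Printing Implicit Defensive.
Local Open Scope classical_set_scope.

(* Alice always announces rounds of two subrounds and offers the cover by the
   sets X_m = {x in X | m in x} with m above every index Bob has used so far;
   this cover works because members of a free ultrafilter are infinite.  The
   index sets M_i that Bob picks are then finite and pairwise disjoint, so the
   unions A_0, A_1 of the M_i over even and over odd subrounds are disjoint and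
   the ultrafilter contains the complement of one of them, say of A_e.  That
   complement is a point of X lying in no set Bob chose at a subround of parity
   e, hence in no round intersection. *)

Lemma finite_nat_bounded (A : set nat) :
  finite_set A -> exists k, forall m, A m -> (m < k)%N.
Proof.
move=> /finite_seqP[s ->]; exists (\max_(m <- s) m).+1 => m ms.
by rewrite ltnS (@leq_bigmax_seq _ _ xpredT id).
Qed.

Lemma infinite_nat_unbounded (A : set nat) K :
  infinite_set A -> exists2 m, (K <= m)%N & A m.
Proof.
move=> /infinite_setD /(_ (finite_II K)) /infinite_setN0[m [Am Km]].
by exists m => //; rewrite leqNgt; apply/negP.
Qed.

Lemma leq_sumn_map_mkseq T (b : T -> nat) (G : nat -> T) t j :
  (t < j)%N -> (b (G t) <= sumn (map b (mkseq G j)))%N.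
Proof.
elim: j => // j IH; rewrite mkseqS map_rcons sumn_rcons ltnS leq_eqVlt.
case/orP => [/eqP -> | /IH tj]; first exact: leq_addl.
exact: leq_trans tj (leq_addr _ _).
Qed.

Lemma ultra_setC_disjoint T (F : set_system T) (A B : set T) :
  UltraFilter F -> A `&` B = set0 -> F (~` A) \/ F (~` B).
Proof.
move=> UF AB0; have [FA|] := in_ultra_setVsetC A UF; last by left.
right; apply: filterS FA => x Ax Bx.
by have : (A `&` B) x by []; rewrite AB0.
Qed.

Lemma nonprincipal_setC1 (F : set_system nat) m :
  UltraFilter F -> nonprincipal F -> F (~` [set m]).
Proof.
move=> UF NP; have [/NP[]|//] := in_ultra_setVsetC [set m] UF.
exact: finite_set1.
Qed.

Lemma round_start_const s G l n :
  (forall h, gs_len s h = l) -> round_start s G n = (l * n)%N.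
Proof. by move=> sl; elim: n => [|n /= ->]; rewrite ?muln0 // sl mulnS addnC. Qed.

Lemma open_cantor_coord m : open [set f : cantor_space | f m].
Proof.
suff : @open cantor_space (proj m @^-1` [set true]).
  by congr open; apply/seteqP; split => f /=; case: (f m).
by apply: open_comp; [move=> + _; exact: proj_continuous | exact: discrete_open].
Qed.

Section PairStrategy.
Variable X : set cantor_space.

Definition member_set (m : nat) : set cantor_space := [set f : cantor_space | f m /\ X f].

Lemma rel_open_member_set m : rel_open X (member_set m).
Proof. by exists [set f : cantor_space | f m]; split; [exact: open_cantor_coord |]. Qed.

Lemma member_set_inj : (forall m, X (fun n => n != m)) -> injective member_set.
Proof.
move=> XC1 m m' E; apply: contrapT => /eqP mm'.
have : member_set m (fun n => n != m') by split; [rewrite /= mm' | exact: XC1].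
by rewrite E => -[]; rewrite /= eqxx.
Qed.

Definition tail_cover (K : nat) : set (set cantor_space) :=
  [set member_set m | m in [set m | (K <= m)%N]].

Lemma open_cover_tail_cover K :
  (forall f, X f -> infinite_set [set n | f n]) -> open_cover_of X (tail_cover K).
Proof.
move=> Xinf; split; first by move=> _ [m _ <-]; exact: rel_open_member_set.
move=> f Xf; have [m Km fm] := infinite_nat_unbounded K (Xinf f Xf).
by exists (member_set m) => //; exists m.
Qed.

(* A strict upper bound for the indices of the sets X_m in S, when S is finite. *)
Definition index_bound (S : set (set cantor_space)) : nat :=
  xget 0%N [set k | forall m, S (member_set m) -> (m < k)%N].

Definition history_bound (h : seq (set (set cantor_space))) : nat :=
  sumn (map index_bound h).

Definition pair_strategy : grouped_strategy :=
  GStrat (fun _ => 2%N) (fun h => tail_cover (history_bound h)).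

Lemma pair_strategy_valid :
  (forall f, X f -> infinite_set [set n | f n]) -> valid_strategy X pair_strategy.
Proof. by move=> Xinf; split=> // h; exact: open_cover_tail_cover. Qed.

Definition chosen_indices (G : nat -> set (set cantor_space)) i : set nat :=
  [set m | G i (member_set m)].

Lemma bob_wins_pair G f : bob_play pair_strategy G ->
  bob_wins X pair_strategy G -> X f ->
  exists n, forall e, (e < 2)%N -> exists2 m, f m & chosen_indices G (2 * n + e) m.
Proof.
move=> Gp -> [n _ Hn]; exists n => e e2.
have [|V GV Vf] := Hn (2 * n + e)%N.
  by rewrite /= !(@round_start_const _ _ 2) //; lia.
have [_ /(_ _ GV) [m _ Vm]] := Gp (2 * n + e)%N.
by move: Vf GV; rewrite -Vm => -[fm _] GV; exists m.
Qed.

Hypothesis member_setI : injective member_set.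

Lemma index_boundP S :
  finite_set S -> forall m, S (member_set m) -> (m < index_bound S)%N.
Proof.
move=> /(finite_preimage (in2W member_setI)) /finite_nat_bounded ex_bound.
exact: (xgetPex 0%N ex_bound).
Qed.

(* Bob's later choices lie in a tail cover above every index he chose before. *)
Lemma chosen_indices_disjoint G i j m : bob_play pair_strategy G -> (i < j)%N ->
  chosen_indices G i m -> chosen_indices G j m -> False.
Proof.
move=> Gp ij Gim Gjm.
have [Gifin _] := Gp i; have [_ /(_ _ Gjm) [m' jm' /member_setI mm']] := Gp j.
have := leq_trans (index_boundP Gifin Gim)
  (leq_trans (leq_sumn_map_mkseq index_bound G ij) jm').
by rewrite mm' ltnn.
Qed.

End PairStrategy.

Theorem mainTheorem5 (F : set_system nat) :
  UltraFilter F -> nonprincipal F ->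
  exists s : grouped_strategy, alice_winning_strategy (as_cantor F) s.
Proof.
move=> UF NP; set X := as_cantor F.
have Xinf f : X f -> infinite_set [set n | f n] by exact: NP.
have inj : injective (member_set X).
  by apply: member_set_inj => m; apply: filterS (nonprincipal_setC1 m UF NP) => n /eqP.
exists (pair_strategy X); split; first exact: pair_strategy_valid.
move=> G Gp Bw.
pose A e := [set m | exists n, chosen_indices X G (2 * n + e) m].
have [e e2 FAe] : exists2 e, (e < 2)%N & F (~` A e).
  have [|FA|FA] := @ultra_setC_disjoint _ F (A 0%N) (A 1%N) UF; last 2 first.
  - by exists 0%N.
  - by exists 1%N.
  apply/seteqP; split => // m [[n Mn] [n' Mn']].
  have [lt|lt] : (2 * n + 0 < 2 * n' + 1)%N \/ (2 * n' + 1 < 2 * n + 0)%N by lia.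
    exact: (chosen_indices_disjoint inj Gp lt Mn Mn').
  exact: (chosen_indices_disjoint inj Gp lt Mn' Mn).
pose f : cantor_space := fun m => `[< ~ A e m >].
have Xf : X f by apply: filterS FAe => m /asboolP.
have [n /(_ e e2) [m /asboolP fm Mm]] := bob_wins_pair Gp Bw Xf.
by apply: fm; exists n.
Qed.
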